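(* Let $L$ be an infinite set and let $Q$ be either the edgeless cube $Q_L$ or the edged cube $\bar Q_L$. If $f_0$ is an illegal configuration, then for every basic sequence, its terminal configuration when applied to $f_0$ is illegal; i.e., no legal configuration is accessible from an illegal one.
   Context: Let $L$ be an infinite set, $-L=\{-r:r\in L\}$ a disjoint copy of $L$, and $0$ a new element; $L^\dagger=-L\cup\{0\}\cup L$ with $-(-r)=r$, $-0=0$. Adjoin $\pm\infty$ with $-(+\infty)=-\infty$ and set $\bar L^\dagger=L^\dagger\cup\{\pm\infty\}$. Points of $U=(\bar L^\dagger)^3$ have coordinates $x,y,z$. The edgeless cube $Q_L$ is the set of points of $U$ with exactly one coordinate in $\{\pm\infty\}$ (cells). The edged cube $\bar Q_L$ is the set of cells $(p,i)$ with $p\in U$, $i\in\{x,y,z\}$, $p_i\in\{\pm\infty\}$ ($i$ marks the face). For $i\in\{x,y,z\}$, $\alpha\in\bar L^\dagger$, the quarter-turn twist $T_{i,\alpha}$ is the permutation of cells fixing every cell whose point $p$ has $p_i\ne\alpha$ and acting on the others by $T_{x,\alpha}(\alpha,y,z)=(\alpha,-z,y)$, $T_{y,\alpha}(x,\alpha,z)=(z,\alpha,-x)$, $T_{z,\alpha}(x,y,\alpha)=(-y,x,\alpha)$ (in $\bar Q_L$ the marked coordinate is carried along by the rotation). Basic twists are $T,T^2,T^3$ for quarter-turn twists $T$. A basic sequence is a sequence $\langle\sigma_\eta:\eta<\theta\rangle$ of basic twists of ordinal length $\theta$. A configuration is a map $f$ from cells to the six colors red, white, green, orange, yellow, blue together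 with a special value NaC; it is legal if it never takes value NaC and illegal otherwise. A twist $\sigma$ acts by $(\sigma f)(c)=f(\sigma^{-1}c)$. Applying $\langle\sigma_\eta:\eta<\theta\rangle$ to $f_0$ produces $f_{\eta+1}=\sigma_\eta f_\eta$, and for limit $\lambda\le\theta$, $f_\lambda(c)$ is the eventually constant value of $f_\eta(c)$ ($\eta<\lambda$) if it exists and NaC otherwise; $f_\theta$ is the terminal configuration. $f$ is accessible from $f_0$ if it is the terminal configuration of some basic sequence applied to $f_0$. *)

From Stdlib Require Import Arith Lia List ClassicalEpsilon.
Set Implicit Arguments.

Section Cube.
Variable L : Type.

(* bar L^dagger = -L ∪ {0} ∪ L ∪ {±oo} *)
Inductive ext : Type := Pos (l : L) | Neg (l : L) | Zero | PInf | NInf.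

Definition negE (a : ext) : ext :=
  match a with
  | Pos l => Neg l | Neg l => Pos l | Zero => Zero | PInf => NInf | NInf => PInf
  end.

Definition isinfb (a : ext) : bool :=
  match a with PInf | NInf => true | _ => false end.

Lemma isinfb_neg a : isinfb (negE a) = isinfb a.
Proof. destruct a; reflexivity. Qed.

Definition point : Type := (ext * ext * ext)%type.

Inductive axis : Type := AX | AY | AZ.

Definition coord (i : axis) (p : point) : ext :=
  match p with (x, y, z) =>
    match i with AX => x | AY => y | AZ => z end end.

Definition rot (i : axis) (p : point) : point :=
  match p with (x, y, z) =>
    match i with
    | AX => (x, negE z, y)
    | AY => (z, y, negE x)
    | AZ => (negE y, x, z)
    end end.

Definition qturn_pt (i : axis) (a : ext) (p : point) : point :=
  if excluded_middle_informative (coord i p = a) then rot i p else p.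

Definition ninf (p : point) : nat :=
  match p with (x, y, z) =>
    Nat.b2n (isinfb x) + Nat.b2n (isinfb y) + Nat.b2n (isinfb z) end.

Lemma ninf_rot i p : ninf (rot i p) = ninf p.
Proof.
  destruct p as [[x y] z]; destruct i; simpl; rewrite ?isinfb_neg; lia.
Qed.

Lemma ninf_qturn i a p : ninf (qturn_pt i a p) = ninf p.
Proof.
  unfold qturn_pt; destruct (excluded_middle_informative _);
    [apply ninf_rot | reflexivity].
Qed.

(* Edgeless cube Q_L: points with exactly one infinite coordinate. *)
Definition qcell : Type := {p : point | ninf p = 1}.

Definition qturn_q (i : axis) (a : ext) (c : qcell) : qcell :=
  exist _ (qturn_pt i a (proj1_sig c))
    (eq_trans (ninf_qturn i a (proj1_sig c)) (proj2_sig c)).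

(* how the marked coordinate is carried along by the rotation about axis i *)
Definition markrot (i j : axis) : axis :=
  match i, j with
  | AX, AY => AZ | AX, AZ => AY
  | AY, AX => AZ | AY, AZ => AX
  | AZ, AX => AY | AZ, AY => AX
  | _, _ => j
  end.

Lemma isinfb_markrot i j p :
  isinfb (coord (markrot i j) (rot i p)) = isinfb (coord j p).
Proof.
  destruct p as [[x y] z]; destruct i, j; simpl; rewrite ?isinfb_neg; reflexivity.
Qed.

(* Edged cube bar Q_L: cells (p, i) with p_i infinite. *)
Definition ecell : Type := {pi : point * axis | isinfb (coord (snd pi) (fst pi)) = true}.

Definition qturn_e_raw (i : axis) (a : ext) (pi : point * axis) : point * axis :=
  if excluded_middle_informative (coord i (fst pi) = a)
  then (rot i (fst pi), markrot i (snd pi)) else pi.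

Lemma qturn_e_ok i a pi :
  isinfb (coord (snd pi) (fst pi)) = true ->
  isinfb (coord (snd (qturn_e_raw i a pi)) (fst (qturn_e_raw i a pi))) = true.
Proof.
  intro H; unfold qturn_e_raw; destruct (excluded_middle_informative _);
    simpl; [rewrite isinfb_markrot|]; exact H.
Qed.

Definition qturn_e (i : axis) (a : ext) (c : ecell) : ecell :=
  exist _ (qturn_e_raw i a (proj1_sig c)) (@qturn_e_ok i a (proj1_sig c) (proj2_sig c)).

Definition cell (edged : bool) : Type := if edged then ecell else qcell.

Definition qturn (edged : bool) : axis -> ext -> cell edged -> cell edged :=
  match edged return axis -> ext -> cell edged -> cell edged with
  | true => qturn_e | false => qturn_q
  end.

(* basic twists: T, T^2, T^3 for a quarter turn T = T_{i,alpha} *)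
Inductive power : Type := P1 | P2 | P3.
Record basic_twist : Type := BT { bt_axis : axis; bt_val : ext; bt_pow : power }.

(* sigma^{-1} for sigma = T^k is T^(4-k) *)
Definition inv_iter (k : power) : nat := match k with P1 => 3 | P2 => 2 | P3 => 1 end.

Definition twist_inv (edged : bool) (s : basic_twist) (c : cell edged) : cell edged :=
  Nat.iter (inv_iter (bt_pow s)) (qturn edged (bt_axis s) (bt_val s)) c.

Inductive color : Type := red | white | green | orange | yellow | blue.

(* configurations: None stands for NaC *)
Definition config (edged : bool) : Type := cell edged -> option color.

Definition legal (edged : bool) (f : config edged) : Prop := forall c, f c <> None.
Definition illegal (edged : bool) (f : config edged) : Prop := exists c, f c = None.

Definition act (edged : bool) (s : basic_twist) (f : config edged) : config edged :=
  fun c => f (twist_inv edged s c).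

End Cube.

Arguments Pos {L}. Arguments Neg {L}. Arguments Zero {L}.
Arguments PInf {L}. Arguments NInf {L}.

(* Ordinal length theta: a well-ordered type W (every ordinal is the order
   type of one, and conversely).  Positions eta <= theta are option W:
   Some w is the position of w, None is theta itself. *)
Definition well_order (W : Type) (lt : W -> W -> Prop) : Prop :=
  (forall a, ~ lt a a) /\
  (forall a b c, lt a b -> lt b c -> lt a c) /\
  (forall a b, lt a b \/ a = b \/ lt b a) /\
  well_founded lt.

Definition ltp (W : Type) (lt : W -> W -> Prop) (x y : option W) : Prop :=
  match x, y with
  | Some a, Some b => lt a b
  | Some _, None => True
  | None, _ => False
  end.

Definition ev_const (L : Type) (edged : bool) (W : Type) (lt : W -> W -> Prop)
  (F : option W -> config L edged) (eta : option W) (c : cell L edged)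
  (v : option color) : Prop :=
  exists xi, ltp lt xi eta /\
    forall zeta, (xi = zeta \/ ltp lt xi zeta) -> ltp lt zeta eta -> F zeta c = v.

(* F is the run of the basic sequence sigma (indexed by W) applied to f0:
   F eta = f_eta for all eta <= theta. *)
Definition is_run (L : Type) (edged : bool) (W : Type) (lt : W -> W -> Prop)
  (sigma : W -> basic_twist L) (f0 : config L edged)
  (F : option W -> config L edged) : Prop :=
  forall eta : option W,
    ((forall xi, ~ ltp lt xi eta) -> F eta = f0) /\
    (forall w, ltp lt (Some w) eta ->
       (forall zeta, ~ (ltp lt (Some w) zeta /\ ltp lt zeta eta)) ->
       F eta = act (sigma w) (F (Some w))) /\
    ((exists xi, ltp lt xi eta) ->
     (forall w, ltp lt (Some w) eta ->
        exists zeta, ltp lt (Some w) zeta /\ ltp lt zeta eta) ->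
     forall c,
       (exists v, ev_const lt F eta c v /\ F eta c = v) \/
       ((forall v, ~ ev_const lt F eta c v) /\ F eta c = None)).

Definition infinite_type (L : Type) : Prop :=
  ~ exists l : list L, forall x : L, In x l.

(* A NaC at a cell c0 can only travel inside the finite set K of cells whose
   coordinates lie in {±x, ±y, ±z}, where x, y, z are the coordinates of c0:
   every twist permutes K.  By transfinite induction some cell of K is NaC at
   every stage.  At a successor the twist carries a NaC of K to a NaC of K.  At
   a limit, each of the finitely many cells of K that is not NaC there has
   stabilised to its limit value beyond some earlier stage, so beyond a common
   stage xi all of them have; the NaC of K at stage xi therefore persists. *)

From Stdlib Require Import List ClassicalEpsilon.
From Stdlib Require Import Classical Eqdep_dec Bool PeanoNat.
Import ListNotations.
Set Implicit Arguments.

Lemma proj1_sig_inj_dec (A B : Type) (B_dec : forall x y : B, {x = y} + {x <> y})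
  (g : A -> B) (b : B) (u v : {x : A | g x = b}) :
  proj1_sig u = proj1_sig v -> u = v.
Proof.
  destruct u as [x hx], v as [y hy]; simpl; intros <-.
  f_equal; apply UIP_dec, B_dec.
Qed.

Lemma iter_agree (X : Type) (P : X -> Prop) (f g : X -> X) (n : nat) (x : X) :
  (forall y, P y -> f y = g y) -> (forall y, P y -> P (g y)) -> P x ->
  Nat.iter n f x = Nat.iter n g x.
Proof.
  intros Hfg HP Hx.
  assert (Hn : P (Nat.iter n g x) /\ Nat.iter n f x = Nat.iter n g x).
  { induction n as [|n [HPn IH]]; simpl; auto.
    rewrite IH; split; auto. }
  apply Hn.
Qed.

Lemma iter_fixpoint (X : Type) (f : X -> X) (n : nat) (x : X) :
  f x = x -> Nat.iter n f x = x.
Proof. intro Hx; induction n as [|n IH]; simpl; [|rewrite IH]; auto. Qed.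

Lemma list_cover_of_injective (A B : Type) (k : A -> B) (P : A -> Prop) (l : list B) :
  (forall x y, k x = k y -> x = y) -> (forall x, P x -> In (k x) l) ->
  exists la : list A, forall x, P x -> In x la.
Proof.
  intros k_inj Pl.
  assert (H : exists la, forall x, P x -> In (k x) l -> In x la).
  { clear Pl; induction l as [|b l [la IH]].
    - exists []; intros x _ [].
    - destruct (classic (exists x0, P x0 /\ k x0 = b)) as [[x0 [Px0 Ex0]]|Hnone].
      + exists (x0 :: la); intros x Px [Eb|Hl]; [left|right; auto].
        apply k_inj; congruence.
      + exists la; intros x Px [Eb|Hl]; auto.
        exfalso; apply Hnone; eauto. }
  destruct H as [la Hla]; exists la; auto.
Qed.

Section Cube.
Variable L : Type.

Lemma negE_involutive (x : ext L) : negE (negE x) = x.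
Proof. destruct x; reflexivity. Qed.

Lemma coord_rot_axis i (p : point L) : coord i (rot i p) = coord i p.
Proof. destruct p as [[x y] z]; destruct i; reflexivity. Qed.

Lemma rot_order4 i (p : point L) : Nat.iter 4 (rot i) p = p.
Proof.
  destruct p as [[x y] z]; destruct i; simpl; rewrite ?negE_involutive; reflexivity.
Qed.

Lemma markrot_involutive i j : markrot i (markrot i j) = j.
Proof. destruct i, j; reflexivity. Qed.

Lemma qturn_pt_on i a (p : point L) : coord i p = a -> qturn_pt i a p = rot i p.
Proof. intro e; unfold qturn_pt; destruct (excluded_middle_informative _); congruence. Qed.

Lemma qturn_pt_off i a (p : point L) : coord i p <> a -> qturn_pt i a p = p.
Proof. intro e; unfold qturn_pt; destruct (excluded_middle_informative _); congruence. Qed.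

Lemma qturn_pt_order4 i a (p : point L) : Nat.iter 4 (qturn_pt i a) p = p.
Proof.
  destruct (classic (coord i p = a)) as [e|n].
  - rewrite (iter_agree (fun q => coord i q = a) _ (rot i)); auto using rot_order4.
    + apply qturn_pt_on.
    + intros q Hq; rewrite coord_rot_axis; exact Hq.
  - apply iter_fixpoint, qturn_pt_off, n.
Qed.

Lemma qturn_e_raw_order4 i a (pj : point L * axis) : Nat.iter 4 (qturn_e_raw i a) pj = pj.
Proof.
  destruct pj as [p j]; unfold qturn_e_raw.
  destruct (classic (coord i p = a)) as [e|n].
  - rewrite (iter_agree (fun q => coord i (fst q) = a) _
               (fun q => (rot i (fst q), markrot i (snd q)))); auto.
    + simpl; rewrite !markrot_involutive; f_equal; apply rot_order4.
    + intros q Hq; simpl; destruct (excluded_middle_informative _); congruence.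
    + intros q Hq; simpl; rewrite coord_rot_axis; exact Hq.
  - apply iter_fixpoint; simpl; destruct (excluded_middle_informative _); congruence.
Qed.

Lemma qturn_order4 edged i a (c : cell L edged) : Nat.iter 4 (qturn edged i a) c = c.
Proof.
  destruct edged; simpl in c |- *.
  - apply (proj1_sig_inj_dec bool_dec); exact (qturn_e_raw_order4 i a (proj1_sig c)).
  - apply (proj1_sig_inj_dec Nat.eq_dec); exact (qturn_pt_order4 i a (proj1_sig c)).
Qed.

(* For s = T^k we have inv_iter k = 4 - k, so this iterates T exactly k times. *)
Definition twist edged (s : basic_twist L) : cell L edged -> cell L edged :=
  Nat.iter (4 - inv_iter (bt_pow s)) (qturn edged (bt_axis s) (bt_val s)).

Lemma twist_inv_twist edged s (c : cell L edged) : twist_inv edged s (twist edged s c) = c.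
Proof.
  unfold twist_inv, twist; rewrite <- Nat.iter_add.
  destruct (bt_pow s); apply qturn_order4.
Qed.

Definition cell_key (edged : bool) : cell L edged -> point L * axis :=
  match edged with
  | true => fun c => proj1_sig c
  | false => fun c => (proj1_sig c, AX)
  end.

Definition cell_point edged (c : cell L edged) : point L := fst (cell_key edged c).
Arguments cell_point {edged} c.

Lemma cell_key_inj edged (c d : cell L edged) : cell_key edged c = cell_key edged d -> c = d.
Proof.
  destruct edged; simpl in c, d |- *; intro E.
  - apply (proj1_sig_inj_dec bool_dec), E.
  - apply (proj1_sig_inj_dec Nat.eq_dec); congruence.
Qed.

Lemma cell_point_qturn edged i a (c : cell L edged) :
  cell_point (qturn edged i a c) = qturn_pt i a (cell_point c).
Proof.
  destruct edged; [|reflexivity].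
  unfold cell_point, qturn_pt; simpl; unfold qturn_e_raw.
  destruct (excluded_middle_informative _); reflexivity.
Qed.

Definition in_box (S : list (ext L)) (p : point L) : Prop := forall i, In (coord i p) S.

Definition neg_closed (S : list (ext L)) : Prop := forall x, In x S -> In (negE x) S.

Lemma in_box_rot S i p : neg_closed S -> in_box S p -> in_box S (rot i p).
Proof.
  intros HS Hp j.
  pose proof (Hp AX); pose proof (Hp AY); pose proof (Hp AZ).
  destruct p as [[x y] z]; destruct i, j; simpl in *; auto.
Qed.

Lemma in_box_qturn_pt S i a p : neg_closed S -> in_box S p -> in_box S (qturn_pt i a p).
Proof.
  intros HS Hp; destruct (classic (coord i p = a)) as [e|n].
  - rewrite qturn_pt_on by exact e; apply in_box_rot; assumption.
  - rewrite qturn_pt_off by exact n; exact Hp.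
Qed.

Lemma in_box_twist S edged s (c : cell L edged) : neg_closed S ->
  in_box S (cell_point c) -> in_box S (cell_point (twist edged s c)).
Proof.
  intros HS; unfold twist; induction (4 - inv_iter (bt_pow s)) as [|n IH]; simpl; auto.
  intro Hc; rewrite cell_point_qturn; apply in_box_qturn_pt; auto.
Qed.

Lemma box_cells_finite edged S :
  exists lc : list (cell L edged), forall c, in_box S (cell_point c) -> In c lc.
Proof.
  apply list_cover_of_injective with
    (k := cell_key edged) (l := list_prod (list_prod (list_prod S S) S) [AX; AY; AZ]).
  { apply cell_key_inj. }
  intros c Hc; unfold cell_point in Hc.
  destruct (cell_key edged c) as [[[x y] z] j].
  pose proof (Hc AX); pose proof (Hc AY); pose proof (Hc AZ); simpl in *.
  repeat apply in_prod; auto.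
  destruct j; simpl; auto.
Qed.

Definition signed_coords (p : point L) : list (ext L) :=
  let '(x, y, z) := p in [x; negE x; y; negE y; z; negE z].

Lemma signed_coords_neg_closed p : neg_closed (signed_coords p).
Proof.
  destruct p as [[x y] z]; intros e He; simpl in He |- *.
  repeat destruct He as [<-|He]; rewrite ?negE_involutive; tauto.
Qed.

Lemma in_box_signed_coords p : in_box (signed_coords p) p.
Proof. destruct p as [[x y] z]; intros []; simpl; tauto. Qed.
End Cube.

Arguments cell_point {L edged} c.

Section Run.
Variables (L : Type) (edged : bool) (W : Type) (lt : W -> W -> Prop).
Hypothesis lt_wo : well_order lt.

Definition lep (x y : option W) : Prop := x = y \/ ltp lt x y.

(* [ev_const lt F eta c v] unfolds to [eventually_below eta (fun zeta => F zeta c = v)]. *)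
Definition eventually_below (eta : option W) (P : option W -> Prop) : Prop :=
  exists xi, ltp lt xi eta /\ forall zeta, lep xi zeta -> ltp lt zeta eta -> P zeta.

Lemma ltp_trans x y z : ltp lt x y -> ltp lt y z -> ltp lt x z.
Proof.
  destruct lt_wo as [_ [lt_trans _]].
  destruct x, y, z; simpl; intros; try tauto; eauto.
Qed.

Lemma lep_trans x y z : lep x y -> lep y z -> lep x z.
Proof.
  intros [<-|Hxy] [<-|Hyz]; unfold lep; eauto using ltp_trans.
Qed.

Lemma ltp_trichotomy x y : ltp lt x y \/ x = y \/ ltp lt y x.
Proof.
  destruct lt_wo as [_ [_ [lt_trichotomy _]]].
  destruct x as [a|], y as [b|]; simpl; auto.
  destruct (lt_trichotomy a b) as [H|[<-|H]]; auto.
Qed.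

Lemma ltp_wf : well_founded (ltp lt).
Proof.
  destruct lt_wo as [_ [_ [_ lt_wf]]].
  assert (Acc_Some : forall w, Acc (ltp lt) (Some w)).
  { intro w; induction (lt_wf w) as [w _ IH]; constructor.
    intros [y|] H; simpl in H; [apply IH, H | contradiction]. }
  intros [w|]; [apply Acc_Some|].
  constructor; intros [y|] H; [apply Acc_Some | contradiction].
Qed.

Lemma eventually_below_mono eta (P Q : option W -> Prop) :
  eventually_below eta P -> (forall zeta, P zeta -> Q zeta) -> eventually_below eta Q.
Proof. intros [xi [Hxi HP]] PQ; exists xi; split; auto. Qed.

Lemma eventually_below_and eta (P Q : option W -> Prop) :
  eventually_below eta P -> eventually_below eta Q ->
  eventually_below eta (fun zeta => P zeta /\ Q zeta).
Proof.
  intros [x1 [H1 HP]] [x2 [H2 HQ]].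
  destruct (ltp_trichotomy x1 x2) as [H|[<-|H]].
  - exists x2; split; auto.
    intros zeta Hz Hze; split; auto.
    apply HP; auto; apply lep_trans with x2; [right|]; auto.
  - exists x1; split; auto.
  - exists x1; split; auto.
    intros zeta Hz Hze; split; auto.
    apply HQ; auto; apply lep_trans with x1; [right|]; auto.
Qed.

Lemma eventually_below_list (A : Type) (l : list A) eta (P : A -> option W -> Prop) :
  (exists xi, ltp lt xi eta) -> (forall a, In a l -> eventually_below eta (P a)) ->
  eventually_below eta (fun zeta => forall a, In a l -> P a zeta).
Proof.
  intros [xi Hxi]; induction l as [|a l IH]; intros Hl.
  - exists xi; split; auto; intros _ _ _ _ [].
  - apply eventually_below_mono with (fun zeta => P a zeta /\ forall b, In b l -> P b zeta).
    + apply eventually_below_and; auto using in_eq, in_cons.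
    + intros zeta [Ha Hb] b [<-|Hbl]; auto.
Qed.

Variables (sigma : W -> basic_twist L) (f0 : config L edged) (F : option W -> config L edged).
Hypothesis run : is_run lt sigma f0 F.

Lemma position_cases eta :
  (forall xi, ~ ltp lt xi eta) \/
  (exists w, ltp lt (Some w) eta /\
     forall zeta, ~ (ltp lt (Some w) zeta /\ ltp lt zeta eta)) \/
  ((exists xi, ltp lt xi eta) /\
   forall w, ltp lt (Some w) eta -> exists zeta, ltp lt (Some w) zeta /\ ltp lt zeta eta).
Proof.
  destruct (classic (exists xi, ltp lt xi eta)) as [Hne|Hempty]; [|left; eauto].
  right; destruct (classic (exists w, ltp lt (Some w) eta /\
     forall zeta, ~ (ltp lt (Some w) zeta /\ ltp lt zeta eta))) as [Hsucc|Hlim]; auto.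
  right; split; auto.
  intros w Hw; apply NNPP; intro Hno; apply Hlim; exists w; split; auto.
  intros zeta Hz; apply Hno; exists zeta; exact Hz.
Qed.

Lemma run_limit_stable eta (lc : list (cell L edged)) :
  (exists xi, ltp lt xi eta) ->
  (forall w, ltp lt (Some w) eta -> exists zeta, ltp lt (Some w) zeta /\ ltp lt zeta eta) ->
  eventually_below eta (fun zeta => forall c, In c lc -> F eta c <> None -> F zeta c = F eta c).
Proof.
  intros Hne Hlim; apply eventually_below_list; auto.
  intros c _; destruct (proj2 (proj2 (run eta)) Hne Hlim c) as [[v [Hev <-]] | [_ Hnac]].
  - destruct Hev as [xi [Hxi Hev]]; exists xi; split; auto.
  - destruct Hne as [xi Hxi]; exists xi; split; auto; congruence.
Qed.

Theorem run_keeps_NaC (P : cell L edged -> Prop) :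
  (forall s c, P c -> P (twist edged s c)) -> (exists lc, forall c, P c -> In c lc) ->
  (exists c, P c /\ f0 c = None) -> forall eta, exists c, P c /\ F eta c = None.
Proof.
  intros HP [lc Hlc] H0 eta; induction (ltp_wf eta) as [eta _ IH].
  destruct (run eta) as [Hinit [Hsucc _]].
  destruct (position_cases eta) as [Hfirst|[[w [Hw Himm]]|[Hne Hlim]]].
  - rewrite Hinit by exact Hfirst; exact H0.
  - destruct (IH _ Hw) as [c [Pc Hc]].
    exists (twist edged (sigma w) c); split; auto.
    rewrite (Hsucc w Hw Himm); unfold act; rewrite twist_inv_twist; exact Hc.
  - destruct (run_limit_stable eta lc Hne Hlim) as [xi [Hxi Hstable]].
    destruct (IH xi Hxi) as [c [Pc Hc]].
    exists c; split; auto.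
    apply NNPP; intro Hdef; apply Hdef.
    rewrite <- (Hstable xi (or_introl eq_refl) Hxi c (Hlc c Pc) Hdef); exact Hc.
Qed.
End Run.

Theorem mainTheorem18 :
  forall (L : Type), infinite_type L ->
  forall (edged : bool) (W : Type) (lt : W -> W -> Prop), well_order lt ->
  forall (sigma : W -> basic_twist L) (f0 : config L edged)
         (F : option W -> config L edged),
    is_run lt sigma f0 F ->
    illegal f0 -> illegal (F None).
Proof.
  intros L _ edged W lt lt_wo sigma f0 F run [c0 Hc0].
  set (S := signed_coords (cell_point c0)).
  assert (box_twist_closed : forall s c,
             in_box S (cell_point c) -> in_box S (cell_point (twist edged s c))).
  { intros s c; apply in_box_twist, signed_coords_neg_closed. }
  assert (c0_in_box : in_box S (cell_point c0)) by apply in_box_signed_coords.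
  destruct (run_keeps_NaC lt_wo run _ box_twist_closed (box_cells_finite edged S)
              (ex_intro _ c0 (conj c0_in_box Hc0)) None) as [c [_ Hc]].
  exists c; exact Hc.
Qed.
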